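(* Let $H^2\times H^2$ carry the product metric $\rho(\mathsf z,\mathsf w)=\sqrt{d_H(z_1,w_1)^2+d_H(z_2,w_2)^2}$, and for $\mathsf z,\mathsf w\in H^2\times H^2$ let $E(\mathsf z,\mathsf w)=\{\mathsf x: \rho(\mathsf x,\mathsf z)=\rho(\mathsf x,\mathsf w)\}$. For distinct $z,w\in H^2$ and $k\in\mathbb R$ let $S_k(z,w)=\{x\in H^2: d_H(x,z)^2-d_H(x,w)^2=k\}$, and for $\mathsf z=(z_1,z_2)$, $\mathsf w=(w_1,w_2)$ with $z_i\neq w_i$ let $E_k(\mathsf z,\mathsf w)=S_k(z_1,w_1)\times S_k(w_2,z_2)$; the spine of $E(\mathsf z,\mathsf w)$ is $E_0(\mathsf z,\mathsf w)$. For an isometry $\gamma$ of $H^2\times H^2$ and $\mathsf x\in H^2\times H^2$, a point $\mathsf y$ is called $\gamma$-visible to $\mathsf x$ if $\rho(\mathsf y,\mathsf x)\le\rho(\mathsf y,\gamma(\mathsf x))$ and $\rho(\mathsf y,\mathsf x)\le \rho(\mathsf y,\gamma^{-1}(\mathsf x))$, and $\gamma$-invisible otherwise; a set is $\gamma$-invisible to $\mathsf x$ if each of its points is. Let $\mathsf x,\mathsf y\in H^2\times H^2$ (with distinct coordinates, so that the spine is defined) and let $\gamma$ be an isometry of $H^2\times H^2$. Suppose $E(\mathsf x,\mathsf y)\cap E(\mathsf x,\gamma(\mathsf x))=\emptyset$ and $E(\mathsf x,\mathsf y)\cap E(\mathsf x,\gamma^{-1}(\mathsf x))=\emptyset$.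 Then $E(\mathsf x,\mathsf y)$ is $\gamma$-invisible to $\mathsf x$ if and only if the spine $E_0(\mathsf x,\mathsf y)$ is $\gamma$-invisible to $\mathsf x$.
   Context: $d_H$ is the hyperbolic distance on the hyperbolic plane $H^2$. *)

From Stdlib Require Import Reals.
Open Scope R_scope.

(* Upper half-plane model of the hyperbolic plane H^2. *)
Definition H2 : Type := { p : R * R | 0 < snd p }.

Definition hx (z : H2) : R := fst (proj1_sig z).
Definition hy (z : H2) : R := snd (proj1_sig z).

Definition arcosh (t : R) : R := ln (t + sqrt (t ^ 2 - 1)).

(* Hyperbolic distance d_H on the upper half-plane (curvature -1). *)
Definition dH (z w : H2) : R :=
  arcosh (1 + ((hx z - hx w) ^ 2 + (hy z - hy w) ^ 2) / (2 * hy z * hy w)).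

Definition H2xH2 : Type := (H2 * H2)%type.

Definition rho (z w : H2xH2) : R :=
  sqrt (dH (fst z) (fst w) ^ 2 + dH (snd z) (snd w) ^ 2).

Definition Eset (z w : H2xH2) (p : H2xH2) : Prop := rho p z = rho p w.

Definition Sk (k : R) (z w : H2) (x : H2) : Prop := dH x z ^ 2 - dH x w ^ 2 = k.

Definition Ek (k : R) (z w : H2xH2) (p : H2xH2) : Prop :=
  Sk k (fst z) (fst w) (fst p) /\ Sk k (snd w) (snd z) (snd p).

Definition spine (z w : H2xH2) : H2xH2 -> Prop := Ek 0 z w.

Definition isometry (g : H2xH2 -> H2xH2) : Prop :=
  (forall p q, rho (g p) (g q) = rho p q) /\
  (forall q, exists p, g p = q) /\ (forall p q, g p = g q -> p = q).

Definition inverse_of (g ginv : H2xH2 -> H2xH2) : Prop :=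
  (forall p, g (ginv p) = p) /\ (forall p, ginv (g p) = p).

(* y is gamma-visible to x (gamma given with its inverse ginv) *)
Definition visible (g ginv : H2xH2 -> H2xH2) (x y : H2xH2) : Prop :=
  rho y x <= rho y (g x) /\ rho y x <= rho y (ginv x).

Definition invisible_set (g ginv : H2xH2 -> H2xH2) (x : H2xH2)
  (A : H2xH2 -> Prop) : Prop :=
  forall y, A y -> ~ visible g ginv x y.

From Stdlib Require Import Reals Lra Psatz ProofIrrelevance.
Open Scope R_scope.

(* A point [p] of [E(x, y)] lies in some [E_k(x, y)]. Moving each factor of [p] along
   a hyperbolic circle about one of the two relevant centres (one whose distance to it is
   at least half the distance between the centres), the level [k] can be brought to [0]
   continuously inside [E(x, y)], ending on the spine. Along this path
   [rho(., g x) - rho(., x)] never vanishes, since [E(x, y)] misses [E(x, g x)], so by the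
   intermediate value theorem it keeps its sign; the same holds for [ginv x]. Hence a
   visible point of [E(x, y)] yields a visible point of the spine. *)

(** * Hyperbolic cosine *)

Lemma cosh_sq_sub_sinh_sq t : cosh t ^ 2 - sinh t ^ 2 = 1.
Proof.
  transitivity (exp t * exp (- t)); [unfold cosh, sinh; field |].
  now rewrite <- exp_plus, Rplus_opp_r, exp_0.
Qed.

Lemma cosh_pos t : 0 < cosh t.
Proof. unfold cosh; pose proof (exp_pos t); pose proof (exp_pos (- t)); lra. Qed.

Lemma sinh_nonneg t : 0 <= t -> 0 <= sinh t.
Proof.
  intros Ht; rewrite <- sinh_0.
  destruct (Req_dec t 0) as [->|Hne]; [lra | left; apply sinh_lt; lra].
Qed.

Lemma cosh_le a b : 0 <= a -> a <= b -> cosh a <= cosh b.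
Proof.
  intros Ha Hab.
  assert (Hs : sinh a <= sinh b).
  { destruct (Req_dec a b) as [->|Hne]; [lra | left; apply sinh_lt; lra]. }
  pose proof (sinh_nonneg a Ha); pose proof (cosh_pos a); pose proof (cosh_pos b).
  pose proof (cosh_sq_sub_sinh_sq a); pose proof (cosh_sq_sub_sinh_sq b).
  nra.
Qed.

Lemma arcosh_cosh t : 0 <= t -> arcosh (cosh t) = t.
Proof.
  intros Ht; unfold arcosh.
  replace (cosh t ^ 2 - 1) with (sinh t ^ 2) by (pose proof (cosh_sq_sub_sinh_sq t); lra).
  rewrite sqrt_pow2 by (apply sinh_nonneg; lra).
  replace (cosh t + sinh t) with (exp t) by (unfold cosh, sinh; field).
  apply ln_exp.
Qed.

Lemma cosh_arcosh s : 1 <= s -> cosh (arcosh s) = s.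
Proof.
  intros Hs; unfold cosh, arcosh.
  set (q := sqrt (s ^ 2 - 1)).
  assert (Hq : q ^ 2 = s ^ 2 - 1) by (apply pow2_sqrt; nra).
  assert (0 <= q) by apply sqrt_pos.
  rewrite exp_Ropp, exp_ln by lra.
  field_simplify; [rewrite Hq; field |]; lra.
Qed.

Lemma arcosh_nonneg s : 1 <= s -> 0 <= arcosh s.
Proof.
  intros Hs; unfold arcosh; rewrite <- ln_1.
  pose proof (sqrt_pos (s ^ 2 - 1)).
  destruct (Req_dec (s + sqrt (s ^ 2 - 1)) 1) as [E|E].
  - rewrite E; lra.
  - left; apply ln_increasing; lra.
Qed.

Lemma continuity_pt_pow_fun f n x :
  continuity_pt f x -> continuity_pt (fun t => f t ^ n) x.
Proof.
  intros Hf; induction n as [|n IH]; simpl.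
  - apply continuity_pt_const; intros ? ?; reflexivity.
  - now apply continuity_pt_mult.
Qed.

Lemma continuity_pt_sqrt_fun f x :
  continuity_pt f x -> 0 <= f x -> continuity_pt (fun t => sqrt (f t)) x.
Proof. intros; apply (continuity_pt_comp f sqrt); auto; now apply continuity_pt_sqrt. Qed.

Lemma continuity_pt_cosh_fun f x :
  continuity_pt f x -> continuity_pt (fun t => cosh (f t)) x.
Proof.
  intros; apply (continuity_pt_comp f cosh); auto.
  apply derivable_continuous_pt, derivable_pt_cosh.
Qed.

Lemma continuity_pt_arcosh_fun f x :
  continuity_pt f x -> 1 <= f x -> continuity_pt (fun t => arcosh (f t)) x.
Proof.
  intros Hf H1; unfold arcosh.
  assert (Hpos : 0 < f x + sqrt (f x ^ 2 - 1)) by (pose proof (sqrt_pos (f x ^ 2 - 1)); lra).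
  apply (continuity_pt_comp (fun t => f t + sqrt (f t ^ 2 - 1)) ln).
  - apply continuity_pt_plus; auto.
    apply continuity_pt_sqrt_fun; [|nra].
    apply continuity_pt_minus; [now apply continuity_pt_pow_fun |].
    apply continuity_pt_const; intros ? ?; reflexivity.
  - apply derivable_continuous_pt; exists (/ (f x + sqrt (f x ^ 2 - 1))).
    now apply derivable_pt_lim_ln.
Qed.

Lemma continuity_pt_ext f g x :
  (forall t, f t = g t) -> continuity_pt f x -> continuity_pt g x.
Proof. intros E; apply (continuity_pt_locally_ext f g 1 x Rlt_0_1); auto. Qed.

Ltac cont :=
  repeat first
    [ assumption
    | apply continuity_pt_const; intros ? ?; reflexivity
    | apply (derivable_continuous_pt _ _ (derivable_pt_id _))
    | apply continuity_pt_pow_fun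
    | apply continuity_pt_sqrt_fun
    | apply continuity_pt_cosh_fun
    | apply continuity_pt_minus
    | apply continuity_pt_div
    | apply continuity_pt_mult
    | apply continuity_pt_plus ].

(** * Coordinates on the upper half-plane *)

Definition cosh_hdist X1 Y1 X2 Y2 := 1 + ((X1 - X2) ^ 2 + (Y1 - Y2) ^ 2) / (2 * Y1 * Y2).
Definition hdist X1 Y1 X2 Y2 := arcosh (cosh_hdist X1 Y1 X2 Y2).

Lemma dH_hdist z w : dH z w = hdist (hx z) (hy z) (hx w) (hy w).
Proof. reflexivity. Qed.

Lemma hy_pos (z : H2) : 0 < hy z.
Proof. now destruct z as [[? ?] ?]. Qed.

Lemma H2_ext (z w : H2) : hx z = hx w -> hy z = hy w -> z = w.
Proof.
  destruct z as [[a b] p], w as [[a' b'] p']; unfold hx, hy; simpl; intros -> ->.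
  f_equal; apply proof_irrelevance.
Qed.

Lemma cosh_hdist_ge1 X1 Y1 X2 Y2 : 0 < Y1 -> 0 < Y2 -> 1 <= cosh_hdist X1 Y1 X2 Y2.
Proof.
  intros; unfold cosh_hdist.
  assert (0 <= ((X1 - X2) ^ 2 + (Y1 - Y2) ^ 2) / (2 * Y1 * Y2)); [|lra].
  pose proof (pow2_ge_0 (X1 - X2)); pose proof (pow2_ge_0 (Y1 - Y2)).
  apply Rmult_le_pos; [lra | left; apply Rinv_0_lt_compat; nra].
Qed.

Lemma cosh_dH z w : cosh (dH z w) = cosh_hdist (hx z) (hy z) (hx w) (hy w).
Proof. apply cosh_arcosh, cosh_hdist_ge1; apply hy_pos. Qed.

Lemma dH_nonneg z w : 0 <= dH z w.
Proof. apply arcosh_nonneg, cosh_hdist_ge1; apply hy_pos. Qed.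

Lemma dH_sym z w : dH z w = dH w z.
Proof.
  rewrite !dH_hdist; unfold hdist, cosh_hdist.
  replace (2 * hy w * hy z) with (2 * hy z * hy w) by ring.
  replace ((hx w - hx z) ^ 2 + (hy w - hy z) ^ 2)
    with ((hx z - hx w) ^ 2 + (hy z - hy w) ^ 2) by ring.
  reflexivity.
Qed.

(* Junk height [1] when [Y <= 0]. *)
Definition mkH2 (X Y : R) : H2.
Proof.
  exists (X, if Rlt_dec 0 Y then Y else 1); simpl.
  destruct (Rlt_dec 0 Y); lra.
Defined.

Lemma hx_mkH2 X Y : hx (mkH2 X Y) = X.
Proof. reflexivity. Qed.

Lemma hy_mkH2 X Y : 0 < Y -> hy (mkH2 X Y) = Y.
Proof. intros; unfold hy; simpl; now destruct (Rlt_dec 0 Y). Qed.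

Lemma continuity_pt_pos_near f x :
  continuity_pt f x -> 0 < f x -> exists a, 0 < a /\ forall y, Rdist y x < a -> 0 < f y.
Proof.
  intros Hc Hpos; destruct (Hc (f x) Hpos) as [a [Ha Hnear]].
  exists a; split; [lra |]; intros y Hy.
  destruct (Req_dec x y) as [<-|Hne]; [assumption |].
  specialize (Hnear y (conj (conj I Hne) Hy)); simpl in Hnear.
  unfold Rdist in Hnear; apply Rabs_def2 in Hnear; lra.
Qed.

Lemma continuity_pt_dH_mkH2 ax ay (w : H2) v :
  continuity_pt ax v -> continuity_pt ay v -> 0 < ay v ->
  continuity_pt (fun t => dH (mkH2 (ax t) (ay t)) w) v.
Proof.
  intros Hx Hy Hpos.
  destruct (continuity_pt_pos_near ay v Hy Hpos) as [a [Ha Hnear]].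
  apply (continuity_pt_locally_ext (fun t => hdist (ax t) (ay t) (hx w) (hy w)) _ a v Ha).
  { intros t Ht; now rewrite dH_hdist, hx_mkH2, hy_mkH2 by auto. }
  pose proof (hy_pos w).
  apply continuity_pt_arcosh_fun; [| now apply cosh_hdist_ge1].
  unfold cosh_hdist; cont; nra.
Qed.

(** * Moebius maps *)

Record mobius := Mobius { ma : R; mb : R; mc : R; md : R; mob_det : 0 < ma * md - mb * mc }.

(* Real and imaginary part of [(a z + b) / (c z + d)] for [z = X + i Y]. *)
Definition mob_den (M : mobius) X Y := (mc M * X + md M) ^ 2 + (mc M * Y) ^ 2.
Definition mob_x (M : mobius) X Y :=
  (ma M * mc M * (X ^ 2 + Y ^ 2) + (ma M * md M + mb M * mc M) * X + mb M * md M)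
  / mob_den M X Y.
Definition mob_y (M : mobius) X Y := (ma M * md M - mb M * mc M) * Y / mob_den M X Y.

Lemma mob_den_pos M X Y : 0 < Y -> 0 < mob_den M X Y.
Proof.
  intros HY; pose proof (mob_det M); unfold mob_den.
  destruct (Req_dec (mc M) 0) as [Hc|Hc].
  - rewrite Hc in *; assert (md M <> 0) by (intros Hd; rewrite Hd in *; lra).
    assert (0 < md M * md M) by (apply Rsqr_pos_lt; auto); nra.
  - assert (0 < mc M * mc M) by (apply Rsqr_pos_lt; auto).
    assert (0 < (mc M * Y) ^ 2)
      by (replace ((mc M * Y) ^ 2) with ((mc M * mc M) * (Y * Y)) by ring;
          apply Rmult_lt_0_compat; nra).
    pose proof (pow2_ge_0 (mc M * X + md M)); lra.
Qed.

Lemma mob_y_pos M X Y : 0 < Y -> 0 < mob_y M X Y.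
Proof.
  intros HY; pose proof (mob_det M); pose proof (mob_den_pos M X Y HY).
  unfold mob_y; apply Rdiv_lt_0_compat; nra.
Qed.

Lemma cosh_hdist_mob M X1 Y1 X2 Y2 : 0 < Y1 -> 0 < Y2 ->
  cosh_hdist (mob_x M X1 Y1) (mob_y M X1 Y1) (mob_x M X2 Y2) (mob_y M X2 Y2)
  = cosh_hdist X1 Y1 X2 Y2.
Proof.
  intros H1 H2; pose proof (mob_det M).
  pose proof (mob_den_pos M X1 Y1 H1); pose proof (mob_den_pos M X2 Y2 H2).
  unfold cosh_hdist, mob_x, mob_y; unfold mob_den in *.
  field; repeat split; lra.
Qed.

Definition mob_mul (M N : mobius) : mobius.
Proof.
  refine (Mobius (ma M * ma N + mb M * mc N) (ma M * mb N + mb M * md N)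
                 (mc M * ma N + md M * mc N) (mc M * mb N + md M * md N) _).
  pose proof (mob_det M); pose proof (mob_det N).
  replace (_ - _) with ((ma M * md M - mb M * mc M) * (ma N * md N - mb N * mc N)) by ring.
  now apply Rmult_lt_0_compat.
Defined.

Definition mob_inv (M : mobius) : mobius.
Proof.
  refine (Mobius (md M) (- mb M) (- mc M) (ma M) _).
  pose proof (mob_det M); lra.
Defined.

Lemma mob_den_mul M N X Y : 0 < Y ->
  mob_den (mob_mul M N) X Y = mob_den M (mob_x N X Y) (mob_y N X Y) * mob_den N X Y.
Proof.
  intros HY; pose proof (mob_den_pos N X Y HY).
  unfold mob_x, mob_y; unfold mob_den in *; cbn [ma mb mc md mob_mul mob_inv]; field; lra.
Qed.

Lemma mob_x_mul M N X Y : 0 < Y ->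
  mob_x (mob_mul M N) X Y = mob_x M (mob_x N X Y) (mob_y N X Y).
Proof.
  intros HY; pose proof (mob_den_pos N X Y HY) as HN.
  pose proof (mob_den_pos M (mob_x N X Y) (mob_y N X Y) (mob_y_pos N X Y HY)) as HM.
  unfold mob_x at 1 2; rewrite mob_den_mul by exact HY.
  (* keep the outer denominator opaque: [field] then only has to clear [mob_den N X Y] *)
  revert HM; generalize (mob_den M (mob_x N X Y) (mob_y N X Y)); intros DM HM.
  unfold mob_x, mob_y; unfold mob_den in *; cbn [ma mb mc md mob_mul mob_inv].
  field; lra.
Qed.

Lemma mob_y_mul M N X Y : 0 < Y ->
  mob_y (mob_mul M N) X Y = mob_y M (mob_x N X Y) (mob_y N X Y).
Proof.
  intros HY; pose proof (mob_den_pos N X Y HY) as HN.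
  pose proof (mob_den_pos M (mob_x N X Y) (mob_y N X Y) (mob_y_pos N X Y HY)) as HM.
  unfold mob_y at 1 2; rewrite mob_den_mul by exact HY.
  revert HM; generalize (mob_den M (mob_x N X Y) (mob_y N X Y)); intros DM HM.
  unfold mob_y; unfold mob_den in *; cbn [ma mb mc md mob_mul mob_inv].
  field; lra.
Qed.

Lemma mob_x_inv M X Y : 0 < Y -> mob_x (mob_inv M) (mob_x M X Y) (mob_y M X Y) = X.
Proof.
  intros HY; rewrite <- mob_x_mul by exact HY; pose proof (mob_det M).
  unfold mob_x, mob_den; cbn [ma mb mc md mob_mul mob_inv].
  replace (md M * mb M + - mb M * md M) with 0 by ring.
  replace (- mc M * ma M + ma M * mc M) with 0 by ring.
  field; nra.
Qed.

Lemma mob_y_inv M X Y : 0 < Y -> mob_y (mob_inv M) (mob_x M X Y) (mob_y M X Y) = Y.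
Proof.
  intros HY; rewrite <- mob_y_mul by exact HY; pose proof (mob_det M).
  unfold mob_y, mob_den; cbn [ma mb mc md mob_mul mob_inv].
  replace (md M * mb M + - mb M * md M) with 0 by ring.
  replace (- mc M * ma M + ma M * mc M) with 0 by ring.
  field; nra.
Qed.

Definition mob_pt (M : mobius) (z : H2) : H2 :=
  exist _ (mob_x M (hx z) (hy z), mob_y M (hx z) (hy z)) (mob_y_pos M _ _ (hy_pos z)).

Lemma dH_mob_pt M z w : dH (mob_pt M z) (mob_pt M w) = dH z w.
Proof.
  rewrite !dH_hdist; unfold hdist; f_equal.
  exact (cosh_hdist_mob M _ _ _ _ (hy_pos z) (hy_pos w)).
Qed.

Lemma mob_pt_inv M z : mob_pt (mob_inv M) (mob_pt M z) = z.
Proof. apply H2_ext; [apply mob_x_inv | apply mob_y_inv]; apply hy_pos. Qed.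

Lemma mob_pt_mul M N z : mob_pt (mob_mul M N) z = mob_pt M (mob_pt N z).
Proof. apply H2_ext; [apply mob_x_mul | apply mob_y_mul]; apply hy_pos. Qed.

Lemma mob_pt_inj M z w : mob_pt M z = mob_pt M w -> z = w.
Proof. intros E; now rewrite <- (mob_pt_inv M z), E, mob_pt_inv. Qed.

Lemma dH_mob_pt_inv M z w : dH (mob_pt (mob_inv M) z) w = dH z (mob_pt M w).
Proof. now rewrite <- (mob_pt_inv M w) at 1; rewrite dH_mob_pt. Qed.

Lemma cosh_dH_mob M z w : cosh (dH z w) =
  cosh_hdist (hx (mob_pt M z)) (hy (mob_pt M z)) (hx (mob_pt M w)) (hy (mob_pt M w)).
Proof. now rewrite <- (dH_mob_pt M), cosh_dH. Qed.

Lemma hx_mob_pt M z : hx (mob_pt M z) = mob_x M (hx z) (hy z).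
Proof. reflexivity. Qed.

Lemma hy_mob_pt M z : hy (mob_pt M z) = mob_y M (hx z) (hy z).
Proof. reflexivity. Qed.

Lemma rotation_onto_axis A P : 0 < P ->
  exists Rot : mobius, mob_x Rot 0 1 = 0 /\ mob_y Rot 0 1 = 1 /\ mob_x Rot A P = 0.
Proof.
  intros HP; destruct (Req_dec A 0) as [HA|HA].
  - exists (Mobius 1 0 0 1 ltac:(lra)); unfold mob_x, mob_y, mob_den; cbn [ma mb mc md].
    rewrite HA; repeat split; field.
  - set (B := (1 - A ^ 2 - P ^ 2) / 2); set (S := sqrt (A ^ 2 + B ^ 2)).
    assert (HS : S ^ 2 = A ^ 2 + B ^ 2) by (apply pow2_sqrt; nra).
    assert (HA2 : 0 < A * A) by (apply Rsqr_pos_lt; auto).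
    assert (Hdet : 0 < (S + B) * (S + B) - (- A) * A) by nra.
    exists (Mobius (S + B) (- A) A (S + B) Hdet); unfold mob_x, mob_y, mob_den.
    cbn [ma mb mc md].
    repeat split; [field; nra | field; nra |].
    unfold Rdiv; apply Rmult_eq_0_compat_r.
    transitivity (A * (S ^ 2 - A ^ 2 - B ^ 2)); [unfold B; field | rewrite HS; ring].
Qed.

Lemma mob_normalize (c o : H2) : c <> o ->
  exists (M : mobius) (mu : R), 0 < mu /\ mu <> 1 /\
    hx (mob_pt M c) = 0 /\ hy (mob_pt M c) = 1 /\
    hx (mob_pt M o) = 0 /\ hy (mob_pt M o) = mu.
Proof.
  intros Hco; pose proof (hy_pos c) as Hc.
  assert (HT : 0 < 1 * hy c - (- hx c) * 0) by lra.
  set (T := Mobius 1 (- hx c) 0 (hy c) HT).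
  assert (Tc : hx (mob_pt T c) = 0 /\ hy (mob_pt T c) = 1).
  { rewrite hx_mob_pt, hy_mob_pt; unfold T, mob_x, mob_y, mob_den; cbn [ma mb mc md].
    split; field; lra. }
  destruct (rotation_onto_axis (hx (mob_pt T o)) (hy (mob_pt T o)) (hy_pos _))
    as [Rot [R1 [R2 R3]]].
  exists (mob_mul Rot T), (hy (mob_pt (mob_mul Rot T) o)).
  rewrite !mob_pt_mul, !(hx_mob_pt Rot), !(hy_mob_pt Rot), (proj1 Tc), (proj2 Tc).
  repeat split; auto; [apply mob_y_pos, hy_pos |].
  intros E; apply Hco, (mob_pt_inj (mob_mul Rot T)), H2_ext.
  - rewrite !mob_pt_mul, !(hx_mob_pt Rot), (proj1 Tc), (proj2 Tc); congruence.
  - rewrite !mob_pt_mul, !(hy_mob_pt Rot), (proj1 Tc), (proj2 Tc); congruence.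
Qed.

(** * Circles and level sets *)

Definition between a b x := (a <= x <= b) \/ (b <= x <= a).

Lemma between_affine p q a b x :
  between a b x -> between (p * a + q) (p * b + q) (p * x + q).
Proof.
  unfold between; intros H.
  destruct (Rle_dec 0 p); destruct H; [left | right | right | left]; split; nra.
Qed.

Lemma between_cosh a b t : 0 <= a -> 0 <= b -> between a b t ->
  between (cosh a) (cosh b) (cosh t).
Proof. intros Ha Hb [[? ?] | [? ?]]; [left | right]; split; apply cosh_le; lra. Qed.

Lemma between_nonneg a b t : 0 <= a -> 0 <= b -> between a b t -> 0 <= t.
Proof. intros ? ? [[? ?] | [? ?]]; lra. Qed.

Lemma between_sqrt a b x :
  0 <= a -> 0 <= b -> between (a ^ 2) (b ^ 2) x -> between a b (sqrt x).
Proof.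
  intros Ha Hb Hx; rewrite <- (sqrt_pow2 a Ha), <- (sqrt_pow2 b Hb).
  destruct Hx as [[? ?] | [? ?]]; [left | right]; split; apply sqrt_le_1_alt; auto.
Qed.

Lemma between_0_l k : between 0 k 0.
Proof. unfold between; lra. Qed.

Lemma between_0_r k : between 0 k k.
Proof. unfold between; lra. Qed.

Lemma Rinv_le_same_sign u v : 0 < u * v -> u <= v -> / v <= / u.
Proof.
  intros Huv Hle.
  assert (u <> 0 /\ v <> 0) as [Hu Hv] by (split; intros E; rewrite E in Huv; lra).
  assert (E : / u - / v = (v - u) * / (u * v)) by (field; auto).
  assert (0 <= (v - u) * / (u * v))
    by (apply Rmult_le_pos; [lra | left; now apply Rinv_0_lt_compat]).
  lra.
Qed.

Lemma between_inv a b x : 0 < a * b -> between a b x ->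
  0 < a * x /\ 0 < x * b /\ between (/ a) (/ b) (/ x).
Proof.
  intros Hab Hx.
  assert (0 < a * x /\ 0 < x * b) as [Hax Hxb].
  { destruct (Rlt_or_le 0 a).
    - assert (0 < b) by nra; assert (0 < x) by (destruct Hx; lra).
      split; apply Rmult_lt_0_compat; lra.
    - assert (a <> 0) by (intros E; rewrite E in Hab; lra).
      assert (b < 0) by nra; assert (x < 0) by (destruct Hx; lra).
      split; nra. }
  repeat split; auto.
  destruct Hx as [[H1 H2] | [H1 H2]]; [right | left];
    split; apply Rinv_le_same_sign; auto; nra.
Qed.

Lemma circle_disc_between C P1 P2 P :
  0 <= 2 * C * P1 - 1 - P1 ^ 2 -> 0 <= 2 * C * P2 - 1 - P2 ^ 2 -> between P1 P2 P ->
  0 <= 2 * C * P - 1 - P ^ 2.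
Proof.
  revert P1 P2.
  assert (Hle : forall P1 P2, 0 <= 2 * C * P1 - 1 - P1 ^ 2 -> 0 <= 2 * C * P2 - 1 - P2 ^ 2 ->
            P1 <= P <= P2 -> 0 <= 2 * C * P - 1 - P ^ 2).
  { intros P1 P2 H1 H2 [HP1 HP2].
    destruct (Req_dec P1 P2) as [<-|Hne]; [replace P with P1 by lra; exact H1 |].
    apply (Rmult_le_reg_r (P2 - P1)); [lra |]; rewrite Rmult_0_l.
    (* Lagrange interpolation of the quadratic at [P1] and [P2] *)
    replace ((2 * C * P - 1 - P ^ 2) * (P2 - P1)) with
      ((2 * C * P1 - 1 - P1 ^ 2) * (P2 - P) + (2 * C * P2 - 1 - P2 ^ 2) * (P - P1)
       + (P - P1) * (P2 - P) * (P2 - P1)) by ring.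
    repeat apply Rplus_le_le_0_compat; repeat apply Rmult_le_pos; lra. }
  intros P1 P2 H1 H2 [HP | HP]; [apply (Hle P1 P2) | apply (Hle P2 P1)]; auto.
Qed.

Lemma cosh_hdist_axis X Y mu : 0 < Y -> 0 < mu ->
  cosh_hdist X Y 0 mu = (X ^ 2 + Y ^ 2 + mu ^ 2) / (2 * mu * Y).
Proof. intros; unfold cosh_hdist; field; lra. Qed.

(* With [c = i] and [o = i mu], the circle [cosh d(z, c) = C] meets [cosh d(z, o) = T] at
   height [circle_y mu C T] and abscissa [+- circle_x]. *)
Definition sgn X := if Rle_dec 0 X then 1 else -1.
Definition circle_y mu C T := (mu ^ 2 - 1) / (2 * (mu * T - C)).
Definition circle_x sg C Y := sg * sqrt (2 * C * Y - 1 - Y ^ 2).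

Section NormalizedCircle.

Variables mu X Y : R.
Hypotheses (Hmu : 0 < mu) (Hmu1 : mu <> 1) (HY : 0 < Y).

Let C := cosh_hdist X Y 0 1.

Let HC : C = (X ^ 2 + Y ^ 2 + 1) / (2 * Y).
Proof. unfold C; rewrite cosh_hdist_axis; [field |..]; lra. Qed.

Let HC1 : 1 <= C.
Proof. apply cosh_hdist_ge1; lra. Qed.

Lemma circle_start : circle_y mu C (cosh_hdist X Y 0 mu) = Y /\ circle_x (sgn X) C Y = X.
Proof.
  split.
  - unfold circle_y; rewrite cosh_hdist_axis, HC by lra.
    assert (mu ^ 2 - 1 <> 0) by (intros E; apply Hmu1; nra).
    field; repeat split; [lra | lra |]; intros E; apply H; lra.
  - unfold circle_x; replace (2 * C * Y - 1 - Y ^ 2) with (X ^ 2) by (rewrite HC; field; lra).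
    rewrite <- Rsqr_pow2, sqrt_Rsqr_abs; unfold sgn.
    destruct (Rle_dec 0 X); [rewrite Rabs_right | rewrite Rabs_left]; lra.
Qed.

Lemma circle_y_between T : between (cosh_hdist X Y 0 mu) C T ->
  mu * T - C <> 0 /\ between Y ((mu + 1) / (2 * C)) (circle_y mu C T).
Proof.
  intros HT.
  set (D1 := mu * cosh_hdist X Y 0 mu - C); set (D2 := mu * C - C).
  assert (ED1 : D1 = (mu ^ 2 - 1) / (2 * Y)).
  { unfold D1; rewrite cosh_hdist_axis, HC by lra; field; lra. }
  assert (HD : 0 < D1 * D2).
  { rewrite ED1; unfold D2.
    replace ((mu ^ 2 - 1) / (2 * Y) * (mu * C - C)) with
      ((mu - 1) * (mu - 1) * ((mu + 1) * C / (2 * Y))) by (field; lra).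
    apply Rmult_lt_0_compat; [apply Rsqr_pos_lt; lra |].
    apply Rdiv_lt_0_compat; nra. }
  assert (HDT : between D1 D2 (mu * T - C)).
  { exact (between_affine mu (- C) _ _ _ HT). }
  destruct (between_inv D1 D2 (mu * T - C) HD HDT) as (H1 & H2 & Hinv).
  assert (HT0 : mu * T - C <> 0) by (intros E; rewrite E in H1; lra).
  assert (HD2 : D2 <> 0) by (intros E; rewrite E in HD; lra).
  assert (Hmu2 : mu ^ 2 - 1 <> 0) by (intros E; apply Hmu1; nra).
  split; [exact HT0 |].
  apply (between_affine ((mu ^ 2 - 1) / 2) 0) in Hinv.
  replace ((mu ^ 2 - 1) / 2 * / D1 + 0) with Y in Hinv by (rewrite ED1; field; lra).
  replace ((mu ^ 2 - 1) / 2 * / D2 + 0) with ((mu + 1) / (2 * C)) in Hinv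
    by (unfold D2 in *; field; split; lra).
  replace ((mu ^ 2 - 1) / 2 * / (mu * T - C) + 0) with (circle_y mu C T) in Hinv
    by (unfold circle_y; field; exact HT0).
  exact Hinv.
Qed.

Hypothesis Hwide : cosh_hdist 0 1 0 mu + 1 <= 2 * C ^ 2.

Lemma circle_point T sg : between (cosh_hdist X Y 0 mu) C T -> sg ^ 2 = 1 ->
  let y := circle_y mu C T in
  mu * T - C <> 0 /\ 0 < y /\ 0 <= 2 * C * y - 1 - y ^ 2 /\
  cosh_hdist (circle_x sg C y) y 0 1 = C /\ cosh_hdist (circle_x sg C y) y 0 mu = T.
Proof.
  intros HT Hsg y.
  destruct (circle_y_between T HT) as [HT0 Hb]; fold y in Hb.
  assert (HP2 : 0 < (mu + 1) / (2 * C)) by (apply Rdiv_lt_0_compat; lra).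
  assert (Hy : 0 < y) by (destruct Hb; lra).
  assert (Hdisc : 0 <= 2 * C * y - 1 - y ^ 2).
  { apply (circle_disc_between C Y ((mu + 1) / (2 * C))); [| | exact Hb].
    - replace (2 * C * Y - 1 - Y ^ 2) with (X ^ 2) by (rewrite HC; field; lra).
      apply pow2_ge_0.
    - rewrite cosh_hdist_axis in Hwide by lra.
      replace (2 * C * ((mu + 1) / (2 * C)) - 1 - ((mu + 1) / (2 * C)) ^ 2)
        with ((2 * C ^ 2 - ((0 ^ 2 + 1 ^ 2 + mu ^ 2) / (2 * mu * 1) + 1)) * (2 * mu) / (4 * C ^ 2))
        by (field; lra).
      apply Rmult_le_pos; [apply Rmult_le_pos; lra | left; apply Rinv_0_lt_compat; nra]. }
  assert (Ex : (circle_x sg C y - 0) ^ 2 = 2 * C * y - 1 - y ^ 2).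
  { unfold circle_x; rewrite Rminus_0_r, Rpow_mult_distr, Hsg, pow2_sqrt; lra. }
  assert (Hmu2 : mu ^ 2 - 1 <> 0) by (intros E; apply Hmu1; nra).
  repeat split; auto; unfold cosh_hdist; rewrite Ex.
  - field; lra.
  - unfold y, circle_y; field; repeat split; auto; lra.
Qed.

End NormalizedCircle.

(* Since [cosh D + 1 = 2 cosh (D / 2) ^ 2], the hypothesis says [dH u c >= dH c o / 2]:
   only then does the circle of radius [dH u c] about [c] reach distance [dH u c] from [o]. *)
Lemma circle_path (c o u : H2) :
  c <> o -> cosh (dH c o) + 1 <= 2 * cosh (dH u c) ^ 2 ->
  exists q : R -> H2, q (dH u o) = u /\
    forall t, between (dH u o) (dH u c) t ->
      dH (q t) c = dH u c /\ dH (q t) o = t /\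
      forall w, continuity_pt (fun s => dH (q s) w) t.
Proof.
  intros Hco Hwide.
  destruct (mob_normalize c o Hco) as (M & mu & Hmu & Hmu1 & Mc1 & Mc2 & Mo1 & Mo2).
  set (X := hx (mob_pt M u)); set (Y := hy (mob_pt M u)).
  set (C := cosh_hdist X Y 0 1).
  assert (HY : 0 < Y) by apply hy_pos.
  assert (HCc : cosh (dH u c) = C) by now rewrite (cosh_dH_mob M), Mc1, Mc2.
  assert (HCo : cosh (dH u o) = cosh_hdist X Y 0 mu) by now rewrite (cosh_dH_mob M), Mo1, Mo2.
  assert (Hwide' : cosh_hdist 0 1 0 mu + 1 <= 2 * C ^ 2).
  { now rewrite HCc, (cosh_dH_mob M c o), Mc1, Mc2, Mo1, Mo2 in Hwide. }
  set (ay := fun s => circle_y mu C (cosh s)).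
  set (ax := fun s => circle_x (sgn X) C (ay s)).
  exists (fun s => mob_pt (mob_inv M) (mkH2 (ax s) (ay s))).
  split.
  - destruct (circle_start mu X Y Hmu Hmu1 HY) as [Sy Sx]; fold C in Sy, Sx.
    assert (Ey : ay (dH u o) = Y) by (unfold ay; rewrite HCo; exact Sy).
    assert (Ex : ax (dH u o) = X) by (unfold ax; rewrite Ey; exact Sx).
    rewrite Ex, Ey.
    replace (mkH2 X Y) with (mob_pt M u) by (apply H2_ext; [| rewrite hy_mkH2]; auto).
    apply mob_pt_inv.
  - intros t Ht.
    assert (Hd : 0 <= dH u o /\ 0 <= dH u c) by (split; apply dH_nonneg).
    assert (HcT : between (cosh_hdist X Y 0 mu) C (cosh t)).
    { rewrite <- HCc, <- HCo; apply between_cosh; tauto. }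
    destruct (circle_point mu X Y Hmu Hmu1 HY Hwide' (cosh t) (sgn X) HcT) as
      (HT0 & Hy & Hdisc & Dc & Do).
    { unfold sgn; destruct (Rle_dec 0 X); ring. }
    fold C in HT0, Hy, Hdisc, Dc, Do; fold (ay t) in Hy, Hdisc, Dc, Do; fold (ax t) in Dc, Do.
    rewrite !dH_mob_pt_inv, !dH_hdist, hx_mkH2, hy_mkH2, Mc1, Mc2, Mo1, Mo2 by exact Hy.
    assert (Ht0 : 0 <= t) by (apply (between_nonneg _ _ _ (proj1 Hd) (proj2 Hd) Ht)).
    unfold hdist; rewrite Dc, Do, <- HCc, !arcosh_cosh by tauto.
    repeat split; auto.
    intros w; apply (continuity_pt_ext (fun s => dH (mkH2 (ax s) (ay s)) (mob_pt M w))).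
    { intros s; now rewrite dH_mob_pt_inv. }
    apply continuity_pt_dH_mkH2; auto; unfold ax, ay, circle_x, circle_y; cont; lra.
Qed.

(* [cosh r cosh s >= cosh^2 (D/2)] for the distances [r, s] from a point to the ends of a
   segment of length [D]. *)
Lemma cosh_hdist_axis_prod mu X Y : 0 < mu -> 0 < Y ->
  cosh_hdist 0 1 0 mu + 1 <= 2 * cosh_hdist X Y 0 1 * cosh_hdist X Y 0 mu.
Proof.
  intros Hmu HY; rewrite !cosh_hdist_axis by lra.
  set (W := X ^ 2 + Y ^ 2).
  assert (HW : Y ^ 2 <= W) by (pose proof (pow2_ge_0 X); unfold W; lra).
  apply Rge_le, Rminus_ge, Rle_ge.
  replace (_ - _) with (((W + 1) * (W + mu ^ 2) - (mu + 1) ^ 2 * Y ^ 2) / (2 * mu * Y ^ 2))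
    by (unfold W; field; lra).
  apply Rmult_le_pos;
    [| left; apply Rinv_0_lt_compat, Rmult_lt_0_compat; [lra | now apply pow_lt]].
  pose proof (pow2_ge_0 (Y ^ 2 - mu)); pose proof (pow2_ge_0 Y); nra.
Qed.

Lemma wide_circle_exists mu X Y : 0 < mu -> 0 < Y ->
  cosh_hdist 0 1 0 mu + 1 <= 2 * cosh_hdist X Y 0 1 ^ 2 \/
  cosh_hdist 0 1 0 mu + 1 <= 2 * cosh_hdist X Y 0 mu ^ 2.
Proof.
  intros Hmu HY; pose proof (cosh_hdist_axis_prod mu X Y Hmu HY).
  pose proof (cosh_hdist_ge1 X Y 0 1 HY Rlt_0_1); pose proof (cosh_hdist_ge1 X Y 0 mu HY Hmu).
  pose proof (cosh_hdist_ge1 0 1 0 mu Rlt_0_1 Hmu).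
  destruct (Rle_or_lt (cosh_hdist 0 1 0 mu + 1) (2 * cosh_hdist X Y 0 1 ^ 2));
    [now left | right].
  (* if both bounds failed, their product would contradict the square of the previous lemma *)
  apply Rnot_lt_le; intros; nra.
Qed.

Lemma either_circle (c o u : H2) : c <> o ->
  cosh (dH c o) + 1 <= 2 * cosh (dH u c) ^ 2 \/ cosh (dH c o) + 1 <= 2 * cosh (dH u o) ^ 2.
Proof.
  intros Hco.
  destruct (mob_normalize c o Hco) as (M & mu & Hmu & _ & Mc1 & Mc2 & Mo1 & Mo2).
  rewrite (cosh_dH_mob M c o), (cosh_dH_mob M u c), (cosh_dH_mob M u o), Mc1, Mc2, Mo1, Mo2.
  apply wide_circle_exists; [exact Hmu | apply hy_pos].
Qed.

Lemma level_path (c o u : H2) (k : R) : c <> o -> Sk k c o u ->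
  exists q : R -> H2, q k = u /\
    forall v, between 0 k v ->
      Sk v c o (q v) /\ forall w, continuity_pt (fun t => dH (q t) w) v.
Proof.
  unfold Sk; intros Hco Hk.
  pose proof (dH_nonneg u c) as Hr; pose proof (dH_nonneg u o) as Hs.
  destruct (either_circle c o u Hco) as [Hw | Hw].
  - destruct (circle_path c o u Hco Hw) as [q [Hq0 Hq]].
    exists (fun v => q (sqrt (dH u c ^ 2 - v))); split.
    + rewrite <- Hk; replace (_ - _) with (dH u o ^ 2) by ring.
      now rewrite sqrt_pow2.
    + intros v Hv.
      assert (Hbt : between (dH u o) (dH u c) (sqrt (dH u c ^ 2 - v))).
      { apply between_sqrt; auto; unfold between in *; lra. }
      assert (Hv0 : 0 <= dH u c ^ 2 - v) by (destruct Hv; nra).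
      destruct (Hq _ Hbt) as (Dc & Do & Hcont); split.
      * rewrite Dc, Do, pow2_sqrt by exact Hv0; ring.
      * intros w.
        apply (continuity_pt_comp (fun t => sqrt (dH u c ^ 2 - t)) (fun s => dH (q s) w)).
        -- cont; exact Hv0.
        -- apply Hcont.
  - rewrite dH_sym in Hw.
    destruct (circle_path o c u (not_eq_sym Hco) Hw) as [q [Hq0 Hq]].
    exists (fun v => q (sqrt (dH u o ^ 2 + v))); split.
    + rewrite <- Hk; replace (_ + _) with (dH u c ^ 2) by ring.
      now rewrite sqrt_pow2.
    + intros v Hv.
      assert (Hbt : between (dH u c) (dH u o) (sqrt (dH u o ^ 2 + v))).
      { apply between_sqrt; auto; unfold between in *; lra. }
      assert (Hv0 : 0 <= dH u o ^ 2 + v) by (destruct Hv; nra).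
      destruct (Hq _ Hbt) as (Do & Dc & Hcont); split.
      * rewrite Dc, Do, pow2_sqrt by exact Hv0; ring.
      * intros w.
        apply (continuity_pt_comp (fun t => sqrt (dH u o ^ 2 + t)) (fun s => dH (q s) w)).
        -- cont; exact Hv0.
        -- apply Hcont.
Qed.

(** * Equidistant sets *)

Lemma Ek_Eset k (x y p : H2xH2) : Ek k x y p -> Eset x y p.
Proof. unfold Ek, Sk, Eset, rho; intros [H1 H2]; f_equal; lra. Qed.

Lemma Eset_Ek (x y p : H2xH2) : Eset x y p ->
  Ek (dH (fst p) (fst x) ^ 2 - dH (fst p) (fst y) ^ 2) x y p.
Proof.
  unfold Eset, Ek, Sk, rho; intros Hp; split; [reflexivity |].
  apply sqrt_inj in Hp; [lra | |]; apply Rplus_le_le_0_compat; apply pow2_ge_0.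
Qed.

Lemma Eset_path (x y p : H2xH2) : fst x <> fst y -> snd x <> snd y -> Eset x y p ->
  exists (q : R -> H2xH2) (k : R), q k = p /\ spine x y (q 0) /\
    forall v, between 0 k v ->
      Eset x y (q v) /\ forall w, continuity_pt (fun t => rho (q t) w) v.
Proof.
  intros Hxy1 Hxy2 Hp; destruct (Eset_Ek x y p Hp) as [Hk1 Hk2].
  set (k := dH (fst p) (fst x) ^ 2 - dH (fst p) (fst y) ^ 2) in Hk1, Hk2.
  destruct (level_path _ _ _ k Hxy1 Hk1) as [q1 [Hq1k Hq1]].
  destruct (level_path _ _ _ k (not_eq_sym Hxy2) Hk2) as [q2 [Hq2k Hq2]].
  exists (fun v => (q1 v, q2 v)), k; split; [| split].
  - now rewrite Hq1k, Hq2k, <- surjective_pairing.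
  - split; [apply (Hq1 0 (between_0_l k)) | apply (Hq2 0 (between_0_l k))].
  - intros v Hv; split.
    + apply (Ek_Eset v); split; [apply (Hq1 v Hv) | apply (Hq2 v Hv)].
    + intros w; unfold rho; cbn [fst snd].
      pose proof (proj2 (Hq1 v Hv) (fst w)); pose proof (proj2 (Hq2 v Hv) (snd w)).
      cont; apply Rplus_le_le_0_compat; apply pow2_ge_0.
Qed.

Lemma nonvanishing_sign phi k :
  (forall v, between 0 k v -> continuity_pt phi v) ->
  (forall v, between 0 k v -> phi v <> 0) -> 0 < phi k -> 0 < phi 0.
Proof.
  intros Hc Hn Hk.
  destruct (Rlt_or_le 0 (phi 0)) as [|H0]; [assumption | exfalso].
  assert (H0' : phi 0 < 0) by (pose proof (Hn 0 (between_0_l k)); lra).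
  destruct (Rtotal_order 0 k) as [Hlt | [<- | Hgt]]; [| lra |].
  - destruct (Ranalysis5.IVT_interv phi 0 k) as [z [Hz Hz0]]; auto.
    + intros a Ha; apply Hc; unfold between; lra.
    + apply (Hn z); [unfold between; lra | exact Hz0].
  - destruct (Ranalysis5.IVT_interv (fun t => - phi t) k 0) as [z [Hz Hz0]]; auto; try lra.
    + intros a Ha; apply (continuity_pt_opp phi), Hc; unfold between; lra.
    + apply (Hn z); [unfold between; lra | lra].
Qed.

Lemma closer_along_path (q : R -> H2xH2) (k : R) (x y w : H2xH2) :
  (forall v, between 0 k v ->
     Eset x y (q v) /\ forall z, continuity_pt (fun t => rho (q t) z) v) ->
  (forall p, ~ (Eset x y p /\ Eset x w p)) ->
  rho (q k) x <= rho (q k) w -> rho (q 0) x < rho (q 0) w.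
Proof.
  intros Hq Hw Hk.
  assert (Hn : forall v, between 0 k v -> rho (q v) w - rho (q v) x <> 0).
  { intros v Hv E; apply (Hw (q v)); split; [apply Hq, Hv | unfold Eset; lra]. }
  assert (0 < rho (q 0) w - rho (q 0) x); [| lra].
  apply (nonvanishing_sign (fun v => rho (q v) w - rho (q v) x) k); [| exact Hn |].
  - intros v Hv; apply continuity_pt_minus; apply Hq, Hv.
  - pose proof (Hn k (between_0_r k)); lra.
Qed.

Theorem mainTheorem3 (x y : H2xH2) (g ginv : H2xH2 -> H2xH2) :
  fst x <> fst y -> snd x <> snd y ->
  isometry g -> inverse_of g ginv ->
  (forall p, ~ (Eset x y p /\ Eset x (g x) p)) ->
  (forall p, ~ (Eset x y p /\ Eset x (ginv x) p)) ->
  (invisible_set g ginv x (Eset x y) <-> invisible_set g ginv x (spine x y)).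
Proof.
  (* Only the points [g x] and [ginv x] enter the argument; [g] need not be an isometry. *)
  intros Hxy1 Hxy2 _ _ Hg Hgi; split.
  - intros HE p Hp; exact (HE p (Ek_Eset 0 x y p Hp)).
  - intros HS p Hp [Vg Vgi].
    destruct (Eset_path x y p Hxy1 Hxy2 Hp) as (q & k & Hqk & Hq0 & Hq).
    rewrite <- Hqk in Vg, Vgi.
    apply (HS (q 0) Hq0); split; left; eapply closer_along_path; eauto.
Qed.
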